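(* Let $\alpha>0$, $\eta=\alpha/(L+\alpha)$, $z_0\in\mathrm{dom}\, f^*$, and consider GCG: for $k\ge0$, $\bar z_k=\mathrm{argmin}_{v}\{\langle-\nabla(h^\alpha)^*(-z_k),v\rangle+f^*(v)\}$, $z_{k+1}=\eta\bar z_k+(1-\eta)z_k$. Let $S(z)=\max_{v\in\mathbb{R}^n}\{\langle-\nabla(h^\alpha)^*(-z),z-v\rangle+f^*(z)-f^*(v)\}$. Then for all $k\ge0$, $\psi^\alpha(z_{k+1})\le\psi^\alpha(z_k)-\eta S(z_k)$.
   Context: Let $\|\cdot\|$ be a norm on $\mathbb{R}^n$ with dual norm $\|\cdot\|_*$. Let $f:\mathbb{R}^n\to\mathbb{R}$ be convex, differentiable and $L$-smooth ($L>0$) with respect to $\|\cdot\|$, $h:\mathbb{R}^n\to(-\infty,\infty]$ closed proper convex with bounded domain, and $w:\mathbb{R}^n\to[0,+\infty]$ closed, $1$-strongly convex with respect to $\|\cdot\|$ on $\mathrm{dom}\, h$, with $\max_{\mathrm{dom}\, h}w<\infty$. Let $h^\alpha=h+\alpha w$ and $\psi^\alpha(z)=(h^\alpha)^*(-z)+f^*(z)$, with $^*$ the convex conjugate; $(h^\alpha)^*$ is differentiable with $(1/\alpha)$-Lipschitz gradient w.r.t. $\|\cdot\|_*$ and $f^*$ is $(1/L)$-strongly convex w.r.t. $\|\cdot\|_*$. *)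

From HB Require Import structures.
From mathcomp Require Import all_boot all_order all_algebra.
From mathcomp Require Import all_classical all_reals all_analysis.
Set Implicit Arguments. Unset Strict Implicit. Unset Printing Implicit Defensive.
Import Order.TTheory GRing.Theory Num.Theory.
Import numFieldNormedType.Exports.
Local Open Scope classical_set_scope.
Local Open Scope ring_scope.

Section Defs.
Variables (R : realType) (n : nat).
Notation V := 'rV[R]_n.

Definition inner (x y : V) : R := \sum_(i < n) x ord0 i * y ord0 i.

Definition is_norm (N : V -> R) : Prop :=
  [/\ forall x, N x = 0 -> x = 0,
      forall (a : R) x, N (a *: x) = `|a| * N x &
      forall x y, N (x + y) <= N x + N y].

Definition dual_norm (N : V -> R) (y : V) : R :=
  sup [set inner y x | x in [set x | N x <= 1]].

Definition grad (F : V -> R) (x : V) : V :=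
  \row_(i < n) ('d F x (delta_mx ord0 i : V)).

Definition conj (F : V -> \bar R) (y : V) : \bar R :=
  ereal_sup [set ((inner y x)%:E - F x)%E | x in [set: V]].

Definition edom (F : V -> \bar R) : set V := [set x | (F x < +oo)%E].

Definition econvex (F : V -> \bar R) : Prop :=
  forall (x y : V) (t : R), 0 <= t <= 1 ->
    (F (t *: x + (1 - t) *: y)%R <= t%:E * F x + (1 - t)%R%:E * F y)%E.

(* closed = lower semicontinuous = closed epigraph *)
Definition eclosed (F : V -> \bar R) : Prop :=
  closed [set p : V * R | (F p.1 <= p.2%:E)%E].

Definition eproper (F : V -> \bar R) : Prop :=
  (forall x, F x != -oo%E) /\ exists x, (F x < +oo)%E.

Definition strongly_convex_on (N : V -> R) (mu : R) (D : set V) (F : V -> \bar R) : Prop :=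
  forall (x y : V) (t : R), D x -> D y -> 0 <= t <= 1 ->
    (F (t *: x + (1 - t) *: y)%R <=
      t%:E * F x + (1 - t)%R%:E * F y - (mu * t * (1 - t) / 2 * N (x - y) ^+ 2)%:E)%E.

End Defs.

(* Write z_{k+1} = z_k + eta (zbar_k - z_k).  Since (h^alpha)^* has a
   (1/alpha)-Lipschitz gradient, the descent lemma bounds (h^alpha)^*(-z_{k+1})
   by its first-order expansion at -z_k plus eta^2 ||zbar_k - z_k||_*^2 / (2 alpha);
   the (1/L)-strong convexity of f^* bounds f^*(z_{k+1}) by
   eta f^*(zbar_k) + (1 - eta) f^*(z_k) - eta (1 - eta) ||zbar_k - z_k||_*^2 / (2 L).
   For eta = alpha / (L + alpha) the two quadratic terms are equal, and since
   zbar_k is the minimizer defining the iteration, the supremum S(z_k) is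
   attained at v = zbar_k; adding the two bounds gives the claim. *)

From HB Require Import structures.
From mathcomp Require Import all_boot all_order all_algebra.
From mathcomp Require Import all_classical all_reals all_analysis.
From mathcomp Require Import ring lra.
Set Implicit Arguments.
Unset Strict Implicit.
Unset Printing Implicit Defensive.

Import Order.TTheory GRing.Theory Num.Theory.
Import numFieldNormedType.Exports.
Local Open Scope classical_set_scope.
Local Open Scope ring_scope.

Section Inner.
Variables (R : realType) (n : nat).
Implicit Types (x y z : 'rV[R]_n) (a : R).

Lemma innerC x y : inner x y = inner y x.
Proof. by apply: eq_bigr => i _; rewrite mulrC. Qed.

Lemma innerDl x y z : inner (x + y) z = inner x z + inner y z.
Proof. by rewrite /inner -big_split; apply: eq_bigr => i _; rewrite mxE mulrDl. Qed.

Lemma innerZl a x z : inner (a *: x) z = a * inner x z.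
Proof. by rewrite /inner mulr_sumr; apply: eq_bigr => i _; rewrite mxE mulrA. Qed.

Lemma innerNl x z : inner (- x) z = - inner x z.
Proof. by rewrite -scaleN1r innerZl mulN1r. Qed.

Lemma innerZr a x z : inner z (a *: x) = a * inner z x.
Proof. by rewrite !(innerC z) innerZl. Qed.

Lemma innerNr x z : inner z (- x) = - inner z x.
Proof. by rewrite !(innerC z) innerNl. Qed.

Lemma innerBr x y z : inner z (x - y) = inner z x - inner z y.
Proof. by rewrite !(innerC z) innerDl innerNl. Qed.

Lemma inner0r z : inner z 0 = 0.
Proof. by rewrite -(scale0r 0) innerZr mul0r. Qed.

Lemma inner0l z : inner 0 z = 0.
Proof. by rewrite innerC inner0r. Qed.

End Inner.

Lemma sup_scale (R : realType) (A : set R) (k : R) : 0 <= k -> A !=set0 ->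
  sup ((fun r => k * r) @` A) = k * sup A.
Proof.
move=> k0 [a Aa]; have [->|k_neq0] := eqVneq k 0.
  rewrite mul0r -[RHS](sup1 0); congr sup; apply/seteqP; split => r.
    by case=> b _ <-; rewrite mul0r.
  by move=> -> /=; exists a => //; rewrite mul0r.
have kp : 0 < k by rewrite lt_neqAle eq_sym k_neq0.
have [hu|hu] := pselect (has_ubound A); last first.
  rewrite !sup_out ?mulr0 //; first by case.
  case=> _ [M HM]; apply: hu; exists (M / k) => b Ab.
  by rewrite ler_pdivlMr // mulrC; apply: HM; exists b.
have hs : has_sup A by split => //; exists a.
have hks : has_sup ((fun r => k * r) @` A).
  split; first by exists (k * a), a.
  case: hu => M HM; exists (k * M) => _ [b Ab <-].
  by rewrite ler_pM2l //; apply: HM.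
apply/eqP; rewrite eq_le; apply/andP; split.
  apply: ge_sup; first by exists (k * a), a.
  by move=> _ [b Ab <-]; rewrite ler_pM2l //; exact: sup_upper_bound.
rewrite -ler_pdivlMl //; apply: ge_sup; first by exists a.
by move=> b Ab; rewrite ler_pdivlMl //; apply: sup_upper_bound hks _ _; exists b.
Qed.

Section DualNorm.
Variables (R : realType) (n : nat) (N : 'rV[R]_n -> R).
Hypothesis normN : is_norm N.
Implicit Types (x d u : 'rV[R]_n).

Lemma is_norm0 : N 0 = 0.
Proof. by case: normN => _ NZ _; rewrite -(scale0r 0) NZ normr0 mul0r. Qed.

Lemma is_normN x : N (- x) = N x.
Proof. by case: normN => _ NZ _; rewrite -scaleN1r NZ normrN normr1 mul1r. Qed.

Lemma is_norm_ge0 x : 0 <= N x.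
Proof.
case: normN => _ _ ND; have := ND x (- x).
by rewrite subrr is_norm0 is_normN -mulr2n pmulrn_lge0.
Qed.

Let unit_pairings d := [set inner d x | x in [set x | N x <= 1]].

Let unit_pairings0 d : unit_pairings d 0.
Proof. by exists 0; rewrite /= ?is_norm0 ?inner0r. Qed.

Lemma dual_norm_ge0 d : 0 <= dual_norm N d.
Proof.
have [hs|hs] := pselect (has_sup (unit_pairings d)); last by rewrite /dual_norm sup_out.
exact: sup_upper_bound hs _ (unit_pairings0 d).
Qed.

Lemma dual_normZ (c : R) d : dual_norm N (c *: d) = `|c| * dual_norm N d.
Proof.
rewrite /dual_norm -sup_scale //; last by exists 0; exact: unit_pairings0.
congr sup; apply/seteqP; split => r.
- case=> x /= Nx <-; have [c0|c0] := leP 0 c.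
    by exists (inner d x); [exists x | rewrite ger0_norm // innerZl].
  exists (inner d (- x)); first by exists (- x); rewrite //= is_normN.
  by rewrite ltr0_norm // innerZl innerNr mulrNN.
- case=> _ [x /= Nx <-] <-; have [c0|c0] := leP 0 c.
    by exists x => //; rewrite ger0_norm // innerZl.
  exists (- x); first by rewrite /= is_normN.
  by rewrite ltr0_norm // innerZl innerNr mulrN mulNr.
Qed.

Lemma dual_normN d : dual_norm N (- d) = dual_norm N d.
Proof. by rewrite -scaleN1r dual_normZ normrN1 mul1r. Qed.

(* Unless the pairings of [d] with the unit ball are bounded, [dual_norm N d]
   is the junk value 0 of [sup] on sets without supremum. *)
Lemma inner_le_norm_dual_norm d u :
  dual_norm N d != 0 -> inner d u <= N u * dual_norm N d.
Proof.
move=> dual_neq0.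
have hs : has_sup (unit_pairings d).
  by apply/not_notP => hs; move: dual_neq0; rewrite /dual_norm sup_out ?eqxx.
have [Nu0|Nu_neq0] := eqVneq (N u) 0.
  by case: normN => N0 _ _; rewrite Nu0 (N0 _ Nu0) inner0r mul0r.
have Nu_gt0 : 0 < N u by rewrite lt_neqAle eq_sym Nu_neq0 is_norm_ge0.
rewrite -ler_pdivrMl // -innerZr.
apply: sup_upper_bound hs _ _; exists ((N u)^-1 *: u) => //=.
by case: normN => _ NZ _; rewrite NZ ger0_norm ?invr_ge0 ?is_norm_ge0 // mulVf.
Qed.

End DualNorm.

Lemma le_affine_derive_bound (R : realType) (phi dphi : R -> R) (a c : R) :
  (forall t : R, is_derive t (1 : R) phi (dphi t)) ->
  (forall t : R, 0 < t < 1 -> dphi t <= a + t * c) ->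
  phi 1 <= phi 0 + a + c / 2.
Proof.
move=> phi_deriv dphi_le.
pose q : {poly R} := a *: 'X + (c / 2) *: 'X^2.
pose g t := phi t - q.[t].
have g_deriv t : is_derive t (1 : R) g (dphi t - (a + c * t)).
  apply: is_deriveB; have q_deriv := is_derive_poly q t; apply: (is_derive_eq q_deriv).
  by rewrite /q derivD !derivZ derivX derivXn !hornerE /=; field.
have g_cont : {within `[0, 1], continuous g}.
  apply: continuous_subspaceT => t; apply: differentiable_continuous.
  by apply/derivable1_diffP; exact: (@ex_derive _ _ _ _ _ _ _ (g_deriv t)).
have [t t01 g10] := MVT ltr01 (fun t _ => g_deriv t) g_cont.
have : g 1 - g 0 <= 0.
  rewrite g10 subr0 mulr1 subr_le0 mulrC.
  by apply: dphi_le; move: t01; rewrite in_itv.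
by rewrite /g /q !hornerE /= !mulr0 !mulr1; lra.
Qed.

Section Descent.
Variables (R : realType) (n : nat).
Implicit Types (F : 'rV[R]_n -> R) (x y d : 'rV[R]_n).

Lemma diff_inner_grad F x d : 'd F x d = inner (grad F x) d.
Proof.
rewrite {1}(row_sum_delta d) linear_sum; apply: eq_bigr => i _.
by rewrite linearZ /= mxE mulrC.
Qed.

Lemma le_affine_diff_bound F y d (a c : R) : (forall x, differentiable F x) ->
  (forall t : R, 0 < t < 1 -> 'd F (y + t *: d) d <= a + t * c) ->
  F (y + d) <= F y + a + c / 2.
Proof.
move=> F_diff dF_le; pose phi t := F (y + t *: d).
have phi_deriv (t : R) : is_derive t (1 : R) phi ('d F (y + t *: d) d).
  have slope_phi : (fun h : R => h^-1 *: ((phi \o shift t) (h *: 1) - phi t)) =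
      (fun h : R => h^-1 *: ((F \o shift (y + t *: d)) (h *: d) - F (y + t *: d))).
    apply: funext => h; rewrite /phi /= /shift /=.
    by rewrite -[h%:A]/(h * 1) mulr1 scalerDl addrCA addrC.
  apply: DeriveDef; first by rewrite /derivable slope_phi; exact: diff_derivable.
  by rewrite /derive slope_phi -/(derive _ _ _) deriveE.
have := le_affine_derive_bound phi_deriv dF_le.
by rewrite /phi scale1r scale0r addr0.
Qed.

Variable N : 'rV[R]_n -> R.
Hypothesis normN : is_norm N.

Lemma lipschitz_grad_descent F (al : R) y d : 0 < al ->
  (forall x, differentiable F x) ->
  (forall x1 x2, N (grad F x1 - grad F x2) <= al^-1 * dual_norm N (x1 - x2)) ->
  F (y + d) <= F y + inner (grad F y) d + dual_norm N d ^+ 2 / al / 2.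
Proof.
move=> al_gt0 F_diff grad_lip.
apply: le_affine_diff_bound => // t /andP[t_gt0 _].
rewrite diff_inner_grad.
set u := grad F (y + t *: d) - grad F y.
have -> : grad F (y + t *: d) = grad F y + u by rewrite /u [RHS]addrC subrK.
rewrite innerDl lerD2l.
have Nu_le : N u <= al^-1 * t * dual_norm N d.
  apply: le_trans (grad_lip (y + t *: d) y) _.
  by rewrite [y + _]addrC addrK dual_normZ // ger0_norm ?(ltW t_gt0) // mulrA.
have [dual0|dual_neq0] := eqVneq (dual_norm N d) 0.
  have Nu0 : N u = 0.
    by apply/eqP; rewrite eq_le is_norm_ge0 // andbT; move: Nu_le; rewrite dual0 mulr0.
  by case: normN => N0 _ _; rewrite (N0 _ Nu0) inner0l dual0 expr2 !mul0r mulr0.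
rewrite innerC; apply: le_trans (inner_le_norm_dual_norm normN u dual_neq0) _.
apply: le_trans (ler_wpM2r (dual_norm_ge0 normN d) Nu_le) _.
by rewrite le_eqVlt; apply/orP; left; apply/eqP; field; rewrite lt0r_neq0.
Qed.

End Descent.

Section ConjugateGap.
Variables (R : realType) (n : nat).
Implicit Types (G : 'rV[R]_n -> \bar R) (g x y z zb v : 'rV[R]_n).
Local Open Scope ereal_scope.

Lemma conj_EFin_gtNy (F : 'rV[R]_n -> R) y : -oo < conj (fun x => (F x)%:E) y.
Proof.
apply: (@lt_le_trans _ _ (inner y 0%R - F 0%R)%R%:E); first exact: ltNyr.
by apply: ereal_sup_ubound; exists 0%R.
Qed.

Lemma strongly_convex_fin_num (M : 'rV[R]_n -> R) (mu : R) G x y (t : R) :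
  strongly_convex_on M mu setT G -> (forall v, -oo < G v) ->
  G x \is a fin_num -> G y \is a fin_num -> (0 <= t <= 1)%R ->
  G (t *: x + (1 - t) *: y)%R \is a fin_num.
Proof.
move=> G_sc G_gtNy Gx_fin Gy_fin t01; apply: fin_real; rewrite G_gtNy /=.
apply: le_lt_trans (G_sc x y t I I t01) _.
by rewrite -(fineK Gx_fin) -(fineK Gy_fin) -!EFinM -EFinD ltry.
Qed.

Section Minimizer.
Variables (G : 'rV[R]_n -> \bar R) (g z zb : 'rV[R]_n).
Hypotheses (G_gtNy : forall v, -oo < G v) (Gz_fin : G z \is a fin_num).
Hypothesis zb_min : forall v, (inner g zb)%:E + G zb <= (inner g v)%:E + G v.

Lemma minimizer_fin_num : G zb \is a fin_num.
Proof.
apply: fin_real; rewrite G_gtNy /=.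
have := zb_min z; rewrite -(fineK Gz_fin) -EFinD.
by case: (G zb) => [r| |] //= _; exact: ltry.
Qed.

Lemma ereal_sup_gap_minimizer :
  ereal_sup [set (inner g (z - v))%:E + G z - G v | v in [set: 'rV[R]_n]] =
  (inner g (z - zb))%:E + G z - G zb.
Proof.
apply/eqP; rewrite eq_le; apply/andP; split; last by apply: ereal_sup_ubound; exists zb.
apply: ge_ereal_sup => _ [v _ <-].
have := zb_min v; have := G_gtNy v.
rewrite -(fineK Gz_fin) -(fineK minimizer_fin_num) !innerBr.
case: (G v) => [r| |] //= _; last by rewrite leNye.
by rewrite -!EFinD !lee_fin => ?; lra.
Qed.

End Minimizer.
End ConjugateGap.

Section GCGStep.
Variables (R : realType) (n : nat) (N H : 'rV[R]_n -> R) (G : 'rV[R]_n -> \bar R).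
Variables (L alpha : R).
Hypotheses (normN : is_norm N) (L_gt0 : 0 < L) (alpha_gt0 : 0 < alpha).
Hypothesis H_diff : forall y, differentiable H y.
Hypothesis H_lip :
  forall y1 y2, N (grad H y1 - grad H y2) <= alpha^-1 * dual_norm N (y1 - y2).
Hypothesis G_sc : strongly_convex_on (dual_norm N) L^-1 setT G.
Hypothesis G_gtNy : forall v, (-oo < G v)%E.

Let eta := alpha / (L + alpha).

Lemma gcg_step_size_ge0_le1 : 0 <= eta <= 1.
Proof.
by rewrite /eta divr_ge0 ?addr_ge0 ?ltW //= ltr_pdivrMr ?addr_gt0 // mul1r ltrDr.
Qed.

Lemma gcg_step_descent z zb : G z \is a fin_num ->
  (forall v, ((inner (- grad H (- z)) zb)%:E + G zb <=
              (inner (- grad H (- z)) v)%:E + G v)%E) ->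
  ((H (- (eta *: zb + (1 - eta) *: z)))%:E + G (eta *: zb + (1 - eta) *: z) <=
   (H (- z))%:E + G z - eta%:E * ereal_sup
     [set (inner (- grad H (- z)) (z - v))%:E + G z - G v | v in [set: 'rV[R]_n]])%E.
Proof.
move=> Gz_fin zb_min; set z' := eta *: zb + (1 - eta) *: z.
have Gzb_fin := minimizer_fin_num G_gtNy Gz_fin zb_min.
rewrite (ereal_sup_gap_minimizer G_gtNy Gz_fin zb_min).
have eta01 := gcg_step_size_ge0_le1.
have G_step := @G_sc zb z eta I I eta01.
have opp_z' : - z' = - z + eta *: (z - zb).
  by apply/rowP => i; rewrite !mxE; ring.
have H_step := lipschitz_grad_descent normN (- z) (eta *: (z - zb)) alpha_gt0 H_diff H_lip.
rewrite -opp_z' innerZr dual_normZ // -opprB dual_normN // in H_step.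
rewrite ger0_norm in H_step; last by case/andP: eta01.
(* The step size makes the quadratic terms of [H_step] and [G_step] cancel. *)
have step_size : (eta * dual_norm N (zb - z)) ^+ 2 / alpha / 2 =
    L^-1 * eta * (1 - eta) / 2 * dual_norm N (zb - z) ^+ 2.
  by rewrite /eta; field; rewrite !lt0r_neq0 ?addr_gt0.
rewrite step_size innerNr !innerBr in H_step.
have Gz'_fin := strongly_convex_fin_num G_sc G_gtNy Gzb_fin Gz_fin eta01.
move: G_step; rewrite -(fineK Gz_fin) -(fineK Gzb_fin) -(fineK Gz'_fin) -!EFinD !lee_fin.
by rewrite innerNl !innerBr; lra.
Qed.

End GCGStep.

Theorem lemmaB3 (R : realType) (n : nat)
  (N : 'rV[R]_n -> R) (f : 'rV[R]_n -> R) (h w : 'rV[R]_n -> \bar R) (L alpha : R)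
  (z zbar : nat -> 'rV[R]_n) :
  (* ||.|| is a norm, ||.||_* its dual *)
  is_norm N ->
  (* f convex, differentiable, L-smooth w.r.t. ||.|| *)
  0 < L ->
  (forall (x y : 'rV[R]_n) (t : R), 0 <= t <= 1 ->
      f (t *: x + (1 - t) *: y) <= t * f x + (1 - t) * f y) ->
  (forall x, differentiable f x) ->
  (forall x y, dual_norm N (grad f x - grad f y) <= L * N (x - y)) ->
  (* h closed proper convex with bounded domain *)
  eclosed h -> eproper h -> econvex h ->
  (exists M : R, forall x, edom h x -> N x <= M) ->
  (* w : R^n -> [0, +oo], closed, 1-strongly convex on dom h, bounded on dom h *)
  (forall x, (0 <= w x)%E) -> eclosed w ->
  strongly_convex_on N 1 (edom h) w ->
  (exists M : R, forall x, edom h x -> (w x <= M%:E)%E) ->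
  0 < alpha ->
  let halpha := fun x => (h x + alpha%:E * w x)%E in
  let Hc := fun y => fine (conj halpha y) in
  (* standing facts from the context: (h^alpha)^* is (finite and) differentiable
     with (1/alpha)-Lipschitz gradient w.r.t. ||.||_*, and f^* is (1/L)-strongly
     convex w.r.t. ||.||_* *)
  (forall y, conj halpha y \is a fin_num) ->
  (forall y, differentiable Hc y) ->
  (forall y1 y2, N (grad Hc y1 - grad Hc y2) <= alpha^-1 * dual_norm N (y1 - y2)) ->
  strongly_convex_on (dual_norm N) L^-1 [set: 'rV[R]_n] (conj (fun x => (f x)%:E)) ->
  let fs := conj (fun x => (f x)%:E) in
  let psi := fun y => (conj halpha (- y) + fs y)%E in
  let eta := alpha / (L + alpha) in
  let S := fun y => ereal_sup [set ((inner (- grad Hc (- y)) (y - v))%:E + fs y - fs v)%E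
                               | v in [set: 'rV[R]_n]] in
  (* GCG iteration *)
  edom fs (z 0) ->
  (forall k v, ((inner (- grad Hc (- z k)) (zbar k))%:E + fs (zbar k)
                 <= (inner (- grad Hc (- z k)) v)%:E + fs v)%E) ->
  (forall k, z k.+1 = eta *: zbar k + (1 - eta) *: z k) ->
  forall k, (psi (z k.+1) <= psi (z k) - eta%:E * S (z k))%E.
Proof.
(* Only the standing facts on [(h^alpha)^*] and [f^*] are used; the hypotheses
   on [f], [h] and [w] are what justifies them in the paper. *)
move=> normN L_gt0 _ _ _ _ _ _ _ _ _ _ _ alpha_gt0 halpha Hc Hc_fin Hc_diff Hc_lip
  fs_sc fs psi eta S z0_dom zbar_min z_next k.
have fs_gtNy y : (-oo < fs y)%E by exact: conj_EFin_gtNy.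
have fs_z_fin j : fs (z j) \is a fin_num.
  elim: j => [|j IH]; first by apply: fin_real; rewrite fs_gtNy z0_dom.
  have fs_zbar_fin := minimizer_fin_num fs_gtNy IH (zbar_min j).
  rewrite z_next; apply: strongly_convex_fin_num fs_sc fs_gtNy fs_zbar_fin IH _.
  exact: gcg_step_size_ge0_le1.
have Hc_E y : conj halpha y = (Hc y)%:E by rewrite fineK.
rewrite /psi !Hc_E z_next.
have := gcg_step_descent normN L_gt0 alpha_gt0 Hc_diff Hc_lip fs_sc fs_gtNy
  (fs_z_fin k) (zbar_min k).
by rewrite /S /eta.
Qed.
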